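(* Let $A,B\in\mathbb{R}^{N\times N}$ and $T>0$, and assume that $1$ is not an eigenvalue of $e^{T(A+B)}$ (i.e. $1$ is not a Floquet multiplier of $u'(t)=(A+B)u(t)$). Then there exists $\tau_0>0$ such that for every $\tau\in(0,\tau_0)$ the delayed system $u'(t)=Au(t)+Bu(t-\tau)$ has no nontrivial $T$-periodic solutions. *)

(* classical reals. Vectors in R^N are functions nat -> R
   (only indices < N matter); N x N matrices are functions nat -> nat -> R. *)
From Stdlib Require Import Reals Arith.
Open Scope R_scope.

Fixpoint rsum (n : nat) (f : nat -> R) : R :=
  match n with
  | O => 0
  | S m => rsum m f + f m
  end.

Definition idmat (i j : nat) : R := if Nat.eqb i j then 1 else 0.

Definition matmul (N : nat) (M P : nat -> nat -> R) (i j : nat) : R :=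
  rsum N (fun l => M i l * P l j).

Fixpoint matpow (N : nat) (M : nat -> nat -> R) (k : nat) : nat -> nat -> R :=
  match k with
  | O => idmat
  | S k' => matmul N M (matpow N M k')
  end.

Definition is_expm (N : nat) (M E : nat -> nat -> R) : Prop :=
  forall i j, (i < N)%nat -> (j < N)%nat ->
    Un_cv (fun n => rsum (S n) (fun k => matpow N M k i j / INR (fact k))) (E i j).

(* lam is an eigenvalue of E (real eigenvalue; for lam = 1 real and complex
   eigenvectors exist simultaneously since E is real) *)
Definition is_eigenvalue (N : nat) (E : nat -> nat -> R) (lam : R) : Prop :=
  exists v : nat -> R,
    (exists i, (i < N)%nat /\ v i <> 0) /\
    forall i, (i < N)%nat -> rsum N (fun j => E i j * v j) = lam * v i.

Definition periodic (N : nat) (T : R) (u : R -> nat -> R) : Prop :=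
  forall t i, (i < N)%nat -> u (t + T) i = u t i.

Definition solves_dde (N : nat) (A B : nat -> nat -> R) (tau : R)
    (u : R -> nat -> R) : Prop :=
  forall t i, (i < N)%nat ->
    derivable_pt_lim (fun s => u s i) t
      (rsum N (fun j => A i j * u t j) + rsum N (fun j => B i j * u (t - tau) j)).

Definition nontrivial (N : nat) (u : R -> nat -> R) : Prop :=
  exists t i, (i < N)%nat /\ u t i <> 0.

From Stdlib Require Import Reals Lra Lia Psatz ZArith.
From Coquelicot Require Import Coquelicot.
From mathcomp Require all_boot all_algebra Rstruct.
Open Scope R_scope.

(* Write M = A + B and E = e^(TM).  For a T-periodic solution u, comparing u
   with the flow of u' = Mu over one period (variation of constants) gives
   (I - E) u(t) = T e^((T-c)M) B (u(t+c-tau) - u(t+c)) for some c in (0, T),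
   by the mean value theorem applied to s |-> e^((T-s)M) u(t+s).  Since
   |u'| <= (|A| + |B|) |u|_oo, the right-hand side is O(tau |u|_oo); since 1 is
   not an eigenvalue of E, I - E has a left inverse.  Hence
   |u|_oo <= C tau |u|_oo, and u = 0 as soon as C tau < 1.  The sup norm is
   attained because u is continuous and periodic. *)

Lemma rsum_ext n f g :
  (forall j, (j < n)%nat -> f j = g j) -> rsum n f = rsum n g.
Proof.
induction n; simpl; intros H; auto.
rewrite IHn by (intros; apply H; lia). rewrite H by lia. reflexivity.
Qed.

Lemma rsum_plus n f g : rsum n (fun j => f j + g j) = rsum n f + rsum n g.
Proof. induction n; simpl; [lra|]. rewrite IHn; lra. Qed.

Lemma rsum_opp n f : rsum n (fun j => - f j) = - rsum n f.
Proof. induction n; simpl; [lra|]. rewrite IHn; lra. Qed.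

Lemma rsum_scal n c f : rsum n (fun j => c * f j) = c * rsum n f.
Proof. induction n; simpl; [lra|]. rewrite IHn; lra. Qed.

Lemma rsum_zero n : rsum n (fun _ => 0) = 0.
Proof. induction n; simpl; [lra|]. rewrite IHn; lra. Qed.

Lemma rsum_swap n m (f : nat -> nat -> R) :
  rsum n (fun i => rsum m (fun j => f i j)) = rsum m (fun j => rsum n (fun i => f i j)).
Proof.
induction n; simpl.
- rewrite rsum_zero; reflexivity.
- rewrite IHn, <- rsum_plus; reflexivity.
Qed.

Lemma rsum_mul_assoc n (x v : nat -> R) (M : nat -> nat -> R) :
  rsum n (fun l => rsum n (fun k => x k * M k l) * v l)
  = rsum n (fun k => x k * rsum n (fun l => M k l * v l)).
Proof.
rewrite (rsum_ext n _ (fun l => rsum n (fun k => x k * M k l * v l))).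
- rewrite rsum_swap. apply rsum_ext; intros k _.
  rewrite <- rsum_scal. apply rsum_ext; intros; ring.
- intros l _. rewrite Rmult_comm, <- rsum_scal. apply rsum_ext; intros; ring.
Qed.

Lemma rsum_nonneg n f : (forall k, (k < n)%nat -> 0 <= f k) -> 0 <= rsum n f.
Proof.
induction n; simpl; intros H; [lra|].
assert (0 <= f n) by (apply H; lia).
assert (0 <= rsum n f) by (apply IHn; intros; apply H; lia).
lra.
Qed.

Lemma rsum_ge_term n f i :
  (forall k, (k < n)%nat -> 0 <= f k) -> (i < n)%nat -> f i <= rsum n f.
Proof.
induction n; simpl; intros H Hi; [lia|].
assert (0 <= f n) by (apply H; lia).
destruct (Nat.eq_dec i n) as [->|Hin].
- assert (0 <= rsum n f) by (apply rsum_nonneg; intros; apply H; lia). lra.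
- assert (f i <= rsum n f) by (apply IHn; [intros; apply H|]; lia). lra.
Qed.

Lemma Rabs_rsum_le n f b :
  (forall j, (j < n)%nat -> Rabs (f j) <= b) -> Rabs (rsum n f) <= INR n * b.
Proof.
induction n; cbn [rsum]; intros H.
- simpl. rewrite Rabs_R0; lra.
- eapply Rle_trans; [apply Rabs_triang|].
  rewrite S_INR.
  assert (Rabs (f n) <= b) by (apply H; lia).
  assert (Rabs (rsum n f) <= INR n * b) by (apply IHn; intros; apply H; lia).
  lra.
Qed.

Lemma rsum_idmat_l n i w : (i < n)%nat -> rsum n (fun l => idmat i l * w l) = w i.
Proof.
induction n; simpl; intros Hi; [lia|].
unfold idmat at 2. destruct (Nat.eq_dec i n) as [->|Hin].
- rewrite Nat.eqb_refl, (rsum_ext _ _ (fun _ => 0)), rsum_zero; [lra|].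
  intros j Hj. unfold idmat. replace (Nat.eqb n j) with false; [lra|].
  symmetry; apply Nat.eqb_neq; lia.
- replace (Nat.eqb i n) with false by (symmetry; apply Nat.eqb_neq; auto).
  rewrite IHn by lia. lra.
Qed.

Lemma rsum_idmat_r n j w : (j < n)%nat -> rsum n (fun l => w l * idmat l j) = w j.
Proof.
intros Hj. rewrite <- (rsum_idmat_l n j w Hj).
apply rsum_ext; intros l _. unfold idmat. rewrite Nat.eqb_sym. ring.
Qed.

Lemma rsum_sum_f_R0 n f : rsum (S n) f = sum_f_R0 f n.
Proof.
induction n; [simpl; lra|].
change (rsum (S (S n)) f) with (rsum (S n) f + f (S n)). rewrite IHn. reflexivity.
Qed.

Lemma derivable_pt_lim_rsum n (F F' : nat -> R -> R) x :
  (forall j, (j < n)%nat -> derivable_pt_lim (F j) x (F' j x)) ->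
  derivable_pt_lim (fun s => rsum n (fun j => F j s)) x (rsum n (fun j => F' j x)).
Proof.
induction n; simpl; intros H.
- apply derivable_pt_lim_const.
- apply (derivable_pt_lim_plus (fun s => rsum n (fun j => F j s)) (F n)).
  + apply IHn; intros; apply H; lia.
  + apply H; lia.
Qed.

Definition mat_abs_sum N (M : nat -> nat -> R) : R :=
  rsum N (fun a => rsum N (fun b => Rabs (M a b))).

Lemma mat_abs_sum_ge0 N M : 0 <= mat_abs_sum N M.
Proof. apply rsum_nonneg; intros; apply rsum_nonneg; intros; apply Rabs_pos. Qed.

Lemma Rabs_le_mat_abs_sum N M a b :
  (a < N)%nat -> (b < N)%nat -> Rabs (M a b) <= mat_abs_sum N M.
Proof.
intros Ha Hb. unfold mat_abs_sum.
eapply Rle_trans; [| apply rsum_ge_term with (i := a); auto].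
- apply (rsum_ge_term N (fun b => Rabs (M a b))); auto. intros; apply Rabs_pos.
- intros k _. apply rsum_nonneg. intros; apply Rabs_pos.
Qed.

Lemma Rabs_mult_le a b x y : Rabs a <= x -> Rabs b <= y -> Rabs (a * b) <= x * y.
Proof. intros Ha Hb. rewrite Rabs_mult. apply Rmult_le_compat; auto using Rabs_pos. Qed.

Lemma matmul_assoc N X Y Z i j :
  matmul N (matmul N X Y) Z i j = matmul N X (matmul N Y Z) i j.
Proof. apply rsum_mul_assoc. Qed.

Lemma matpow_succ_r N M k i j : (i < N)%nat -> (j < N)%nat ->
  matpow N M (S k) i j = matmul N (matpow N M k) M i j.
Proof.
revert i j; induction k; intros i j Hi Hj.
- simpl. unfold matmul. rewrite rsum_idmat_r, rsum_idmat_l by auto. reflexivity.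
- change (matpow N M (S (S k)) i j) with (matmul N M (matpow N M (S k)) i j).
  change (matmul N (matpow N M (S k)) M i j)
    with (matmul N (matmul N M (matpow N M k)) M i j).
  rewrite matmul_assoc. apply rsum_ext; intros l Hl. rewrite IHk by auto. reflexivity.
Qed.

Lemma matpow_scale N M c k i j :
  matpow N (fun a b => c * M a b) k i j = c ^ k * matpow N M k i j.
Proof.
revert i j; induction k; intros i j; simpl; [ring|].
unfold matmul. rewrite <- !rsum_scal. apply rsum_ext; intros l _. rewrite IHk. ring.
Qed.

Lemma Rabs_matpow_le N M m k i j : 0 <= m ->
  (forall a b, (a < N)%nat -> (b < N)%nat -> Rabs (M a b) <= m) ->
  (i < N)%nat -> (j < N)%nat -> Rabs (matpow N M k i j) <= (INR N * m) ^ k.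
Proof.
intros Hm HM. revert i j; induction k; intros i j Hi Hj; simpl.
- unfold idmat. destruct (Nat.eqb i j); rewrite ?Rabs_R1, ?Rabs_R0; lra.
- eapply Rle_trans; [apply (Rabs_rsum_le _ _ (m * (INR N * m) ^ k))|].
  + intros l Hl. apply Rabs_mult_le; auto.
  + right; ring.
Qed.

Definition expm_coef N M i j (k : nat) : R := matpow N M k i j / INR (fact k).
Definition expmt N M r i j : R := PSeries (expm_coef N M i j) r.

Lemma expm_coef_CV_disk N M i j r :
  (i < N)%nat -> (j < N)%nat -> CV_disk (expm_coef N M i j) r.
Proof.
intros Hi Hj. set (x := INR N * mat_abs_sum N M * Rabs r).
apply (@ex_series_le R_AbsRing R_CompleteNormedModule)
  with (b := fun n => / INR (fact n) * x ^ n).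
- intros n. change (norm (Rabs (expm_coef N M i j n * r ^ n)))
    with (Rabs (Rabs (expm_coef N M i j n * r ^ n))).
  rewrite Rabs_Rabsolu. unfold expm_coef, Rdiv.
  rewrite !Rabs_mult, Rabs_inv, <- RPow_abs.
  rewrite (Rabs_right (INR (fact n))) by (apply Rle_ge, Rlt_le, INR_fact_lt_0).
  unfold x. rewrite Rpow_mult_distr.
  assert (Rabs (matpow N M n i j) <= (INR N * mat_abs_sum N M) ^ n)
    by (apply Rabs_matpow_le; auto using mat_abs_sum_ge0, Rabs_le_mat_abs_sum).
  assert (0 < / INR (fact n)) by (apply Rinv_0_lt_compat, INR_fact_lt_0).
  assert (0 <= Rabs r ^ n) by (apply pow_le, Rabs_pos).
  replace (/ INR (fact n) * ((INR N * mat_abs_sum N M) ^ n * Rabs r ^ n))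
    with ((INR N * mat_abs_sum N M) ^ n * / INR (fact n) * Rabs r ^ n) by ring.
  apply Rmult_le_compat_r; [lra|]. apply Rmult_le_compat_r; lra.
- exists (exp x). apply (is_series_ext (fun k => scal (pow_n x k) (/ INR (fact k)))).
  + intros n. change (pow_n x n * / INR (fact n) = / INR (fact n) * x ^ n).
    rewrite pow_n_pow; apply Rmult_comm.
  + apply is_exp_Reals.
Qed.

Lemma expm_coef_CV_radius N M i j x :
  (i < N)%nat -> (j < N)%nat -> Rbar_lt (Rabs x) (CV_radius (expm_coef N M i j)).
Proof.
intros Hi Hj. apply Rbar_lt_le_trans with (y := Finite (Rabs x + 1)); [simpl; lra|].
destruct (Lub_Rbar_correct (CV_disk (expm_coef N M i j))) as [Hub _].
apply Hub, expm_coef_CV_disk; auto.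
Qed.

Lemma ex_pseries_expm_coef N M i j x :
  (i < N)%nat -> (j < N)%nat -> ex_pseries (expm_coef N M i j) x.
Proof. intros; apply CV_radius_inside, expm_coef_CV_radius; auto. Qed.

Lemma PSeries_rsum n (c : nat -> R) (b : nat -> nat -> R) x :
  (forall l, (l < n)%nat -> ex_pseries (b l) x) ->
  ex_pseries (fun k => rsum n (fun l => c l * b l k)) x /\
  PSeries (fun k => rsum n (fun l => c l * b l k)) x
  = rsum n (fun l => c l * PSeries (b l) x).
Proof.
induction n; intros H.
- split; [|apply PSeries_const_0].
  apply ex_pseries_R, (ex_series_ext (fun n => (/ 2) ^ n * 0)); [intros; simpl; ring|].
  apply ex_series_scal_r, ex_series_geom. rewrite Rabs_pos_eq; lra.
- destruct IHn as [Hex Heq]; [intros; apply H; lia|].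
  assert (Hb : ex_pseries (PS_scal (c n) (b n)) x) by (apply ex_pseries_scal; [apply Rmult_comm | apply H; lia]).
  assert (Hsplit : forall k, PS_plus (fun k => rsum n (fun l => c l * b l k))
                     (PS_scal (c n) (b n)) k = rsum (S n) (fun l => c l * b l k))
    by reflexivity.
  split.
  + eapply ex_pseries_ext; [exact Hsplit|]. apply ex_pseries_plus; auto.
  + rewrite <- (PSeries_ext _ _ x Hsplit), PSeries_plus, PSeries_scal, Heq by auto.
    reflexivity.
Qed.

Lemma expmt_0 N M i j : expmt N M 0 i j = idmat i j.
Proof. unfold expmt. rewrite PSeries_0. unfold expm_coef. simpl. field. Qed.

Lemma expmt_derive N M r i j : (i < N)%nat -> (j < N)%nat ->
  derivable_pt_lim (fun s => expmt N M s i j) r (matmul N (expmt N M r) M i j).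
Proof.
intros Hi Hj. apply is_derive_Reals.
replace (matmul N (expmt N M r) M i j)
  with (PSeries (PS_derive (expm_coef N M i j)) r).
- apply is_derive_PSeries, expm_coef_CV_radius; auto.
- rewrite (PSeries_ext _ (fun k => rsum N (fun l => M l j * expm_coef N M i l k))).
  + rewrite (proj2 (PSeries_rsum N _ _ r (fun l Hl => ex_pseries_expm_coef N M i l r Hi Hl))).
    apply rsum_ext; intros; unfold expmt; ring.
  + intros k. unfold PS_derive, expm_coef.
    rewrite matpow_succ_r by auto. unfold matmul.
    change (fact (S k)) with (S k * fact k)%nat. rewrite mult_INR.
    rewrite (rsum_ext N (fun l => M l j * (matpow N M k i l / INR (fact k)))
      (fun l => / INR (fact k) * (matpow N M k i l * M l j)))
      by (intros; unfold Rdiv; ring).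
    rewrite rsum_scal.
    assert (0 < INR (S k)) by (apply lt_0_INR; lia).
    assert (0 < INR (fact k)) by apply INR_fact_lt_0.
    field; split; lra.
Qed.

Lemma is_expm_expmt N M T : is_expm N (fun i j => T * M i j) (expmt N M T).
Proof.
intros i j Hi Hj.
assert (H := PSeries_correct _ _ (ex_pseries_expm_coef N M i j T Hi Hj)).
apply is_series_Reals in H.
intros eps Heps. destruct (H eps Heps) as [K HK]. exists K. intros n Hn.
replace (rsum (S n) _)
  with (sum_f_R0 (fun k => scal (pow_n T k) (expm_coef N M i j k)) n); [exact (HK n Hn)|].
rewrite <- rsum_sum_f_R0. apply rsum_ext; intros k _.
change (scal (pow_n T k) (expm_coef N M i j k)) with (pow_n T k * expm_coef N M i j k).
rewrite pow_n_pow, matpow_scale. unfold expm_coef, Rdiv. ring.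
Qed.

Lemma finite_uniform_bound n (P : nat -> R -> Prop) :
  (forall k K K', K <= K' -> P k K -> P k K') ->
  (forall k, (k < n)%nat -> exists K, P k K) -> exists K, forall k, (k < n)%nat -> P k K.
Proof.
intros Hmon. induction n; intros H.
- exists 0. intros; lia.
- destruct IHn as [K1 HK1]; [intros; apply H; lia|].
  destruct (H n ltac:(lia)) as [K2 HK2].
  exists (Rmax K1 K2). intros k Hk. destruct (Nat.eq_dec k n) as [->|].
  + apply Hmon with K2; auto. apply Rmax_r.
  + apply Hmon with K1; [apply Rmax_l | apply HK1; lia].
Qed.

Lemma continuous_bounded_on_segment f a b : a <= b ->
  (forall r, a <= r <= b -> continuity_pt f r) ->
  exists K, forall r, a <= r <= b -> Rabs (f r) <= K.
Proof.
intros Hab Hc. destruct (continuity_ab_maj (fun r => Rabs (f r)) a b Hab) as [x [Hx _]].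
- intros r Hr. exact (continuity_pt_comp f Rabs r (Hc r Hr) (Rcontinuity_abs (f r))).
- exists (Rabs (f x)). auto.
Qed.

Lemma expmt_bounded N M T : 0 <= T -> exists K, 0 <= K /\
  forall i j r, (i < N)%nat -> (j < N)%nat -> 0 <= r <= T -> Rabs (expmt N M r i j) <= K.
Proof.
intros HT.
destruct (finite_uniform_bound N (fun i K => forall j, (j < N)%nat ->
    forall r, 0 <= r <= T -> Rabs (expmt N M r i j) <= K)) as [K HK].
- intros k K K' HK H j Hj r Hr. eapply Rle_trans; [apply H|]; auto.
- intros i Hi. apply (finite_uniform_bound N
    (fun j K => forall r, 0 <= r <= T -> Rabs (expmt N M r i j) <= K)).
  + intros k K K' HK H r Hr. eapply Rle_trans; [apply H|]; auto.
  + intros j Hj. apply continuous_bounded_on_segment; auto. intros r _.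
    apply derivable_continuous_pt. eexists. apply expmt_derive; auto.
- exists (Rabs K). split; [apply Rabs_pos|].
  intros. eapply Rle_trans; [apply HK; auto | apply RRle_abs].
Qed.

Lemma finite_family_argmax n (g : nat -> R -> R) : (0 < n)%nat ->
  (forall j, (j < n)%nat -> exists t, forall s, g j s <= g j t) ->
  exists j t, (j < n)%nat /\ forall k s, (k < n)%nat -> g k s <= g j t.
Proof.
induction n; intros Hn H; [lia|].
destruct (H n ltac:(lia)) as [tn Htn].
destruct (Nat.eq_dec n 0) as [->|Hn0].
- exists 0%nat, tn. split; [lia|]. intros k s Hk. replace k with 0%nat by lia. auto.
- destruct IHn as [j [t [Hj Ht]]]; [lia | intros; apply H; lia|].
  destruct (Rle_dec (g j t) (g n tn)).
  + exists n, tn. split; [lia|]. intros k s Hk. destruct (Nat.eq_dec k n) as [->|]; auto.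
    eapply Rle_trans; [apply Ht; lia | auto].
  + exists j, t. split; [lia|]. intros k s Hk. destruct (Nat.eq_dec k n) as [->|].
    * eapply Rle_trans; [apply Htn | lra].
    * apply Ht; lia.
Qed.

Lemma periodic_shift_nat N T u : periodic N T u ->
  forall n t j, (j < N)%nat -> u (t + INR n * T) j = u t j.
Proof.
intros Hp n. induction n; intros t j Hj.
- simpl. rewrite Rmult_0_l, Rplus_0_r; reflexivity.
- rewrite S_INR. replace (t + (INR n + 1) * T) with ((t + INR n * T) + T) by ring.
  rewrite Hp by auto. apply IHn; auto.
Qed.

Lemma periodic_representative N T u : 0 < T -> periodic N T u -> forall t,
  exists t', 0 <= t' <= T /\ forall j, (j < N)%nat -> u t j = u t' j.
Proof.
intros HT Hp t. destruct (archimed (t / T)) as [H1 H2].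
set (z := (up (t / T) - 1)%Z).
assert (Hz : IZR z * T <= t < IZR z * T + T).
{ assert (IZR z <= t / T < IZR z + 1) by (unfold z; rewrite minus_IZR; lra).
  replace t with (t / T * T) by (field; lra). nra. }
exists (t - IZR z * T). split; [lra|].
intros j Hj. destruct (Z_le_dec 0 z).
- rewrite <- (periodic_shift_nat N T u Hp (Z.to_nat z) (t - IZR z * T) j Hj).
  rewrite INR_IZR_INZ, Z2Nat.id by auto. f_equal. ring.
- rewrite <- (periodic_shift_nat N T u Hp (Z.to_nat (- z)) t j Hj).
  rewrite INR_IZR_INZ, Z2Nat.id, opp_IZR by lia. f_equal. ring.
Qed.

Lemma periodic_abs_max N T u : 0 < T -> (0 < N)%nat -> periodic N T u ->
  (forall j s, (j < N)%nat -> continuity_pt (fun r => u r j) s) ->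
  exists j0 t0, (j0 < N)%nat /\ forall k s, (k < N)%nat -> Rabs (u s k) <= Rabs (u t0 j0).
Proof.
intros HT HN Hp Hc.
apply (finite_family_argmax N (fun j s => Rabs (u s j)) HN).
intros j Hj.
destruct (continuity_ab_maj (fun r => Rabs (u r j)) 0 T) as [x [Hx _]]; [lra| |].
- intros r _. exact (continuity_pt_comp _ Rabs r (Hc j r Hj) (Rcontinuity_abs _)).
- exists x. intros s. destruct (periodic_representative N T u HT Hp s) as [s' [Hs' ->]]; auto.
Qed.

Lemma derivable_pt_lim_shift f a s l :
  derivable_pt_lim f (a + s) l -> derivable_pt_lim (fun s => f (a + s)) s l.
Proof.
intros H. replace l with (l * 1) by ring.
apply (derivable_pt_lim_comp (fun s => a + s) f s 1 l); auto.
replace 1 with (0 + 1) by ring.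
apply derivable_pt_lim_plus; [apply derivable_pt_lim_const | apply derivable_pt_lim_id].
Qed.

Lemma derivable_pt_lim_reflect f a s l :
  derivable_pt_lim f (a - s) l -> derivable_pt_lim (fun s => f (a - s)) s (l * -1).
Proof.
intros H. apply (derivable_pt_lim_comp (fun s => a - s) f s (-1) l); auto.
replace (-1) with (0 - 1) by ring.
apply derivable_pt_lim_minus; [apply derivable_pt_lim_const | apply derivable_pt_lim_id].
Qed.

Lemma rsum_dde_defect N (phi : nat -> R) (A B : nat -> nat -> R) (v w : nat -> R) :
  rsum N (fun l => (rsum N (fun k => A l k * v k) + rsum N (fun k => B l k * w k)) * phi l
      + (rsum N (fun k => phi k * (A k l + B k l)) * -1) * v l)
  = rsum N (fun l => phi l * rsum N (fun k => B l k * (w k - v k))).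
Proof.
rewrite rsum_plus.
rewrite (rsum_ext N (fun l => _ * -1 * v l)
  (fun l => - (rsum N (fun k => phi k * (A k l + B k l)) * v l))) by (intros; ring).
rewrite rsum_opp, rsum_mul_assoc, <- rsum_opp, <- rsum_plus.
apply rsum_ext; intros l _.
rewrite (rsum_ext N (fun k => B l k * (w k - v k)) (fun k => B l k * w k + - (B l k * v k)))
  by (intros; ring).
rewrite (rsum_ext N (fun k => (A l k + B l k) * v k) (fun k => A l k * v k + B l k * v k))
  by (intros; ring).
rewrite !rsum_plus, rsum_opp. ring.
Qed.

Module MatrixInverse.
Import all_boot all_algebra Rstruct GRing.Theory.
Local Open Scope ring_scope.

Lemma rsum_big n (f : nat -> R) : rsum n f = \sum_(j < n) f j.
Proof.
elim: n => [|n IH] /=; first by rewrite big_ord0.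
by rewrite big_ord_recr /= IH.
Qed.

Definition one_sub_mx n (E : nat -> nat -> R) : 'M[R]_n.+1 :=
  \matrix_(i, j) ((if (i : nat) == j then 1 else 0) - E i j).

(* det0P yields a row vector v with v (I - E)^T = 0, i.e. (I - E) v^T = 0. *)
Lemma one_sub_mx_unit n E : ~ is_eigenvalue n.+1 E 1 -> one_sub_mx n E \in unitmx.
Proof.
move=> Hn; rewrite unitmxE unitfE; apply/negP => /eqP H0.
have /det0P [v Hv0 Hv] : \det (one_sub_mx n E)^T == 0 by rewrite det_tr H0.
apply: Hn; exists (fun j => if (j < n.+1)%N then v ord0 (inord j) else 0); split.
  have [k Hk] : exists k, v ord0 k != 0.
    apply/existsP; move: Hv0; apply: contraR; rewrite negb_exists => /forallP H.
    by apply/eqP/rowP => k; rewrite mxE; move: (H k); rewrite negbK => /eqP.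
  exists k; split; first by apply/ltP; exact: ltn_ord.
  by rewrite ltn_ord inord_val; apply/eqP.
move=> i /ltP Hi.
rewrite rsum_big Hi Rmult_1_l.
under eq_bigr => j _ do rewrite ltn_ord inord_val.
have := congr1 (fun M : 'M[R]_(1, n.+1) => M ord0 (inord i)) Hv => /= H.
rewrite !mxE in H.
have H' : \sum_(j < n.+1) (v ord0 j * (if i == j then 1 else 0) - v ord0 j * E i j) = 0.
  by apply: (eq_trans _ H); apply: eq_bigr => j _; rewrite !mxE inordK // mulrBr.
move: H'; rewrite sumrB (bigD1 (inord i)) //= inordK // eqxx mulr1.
rewrite big1; last first.
  move=> j /negP Hj; case: eqP => Hji; last by rewrite mulr0.
  by exfalso; apply: Hj; apply/eqP/val_inj; rewrite /= inordK // Hji.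
rewrite addr0 => /eqP; rewrite subr_eq0 => /eqP ->.
by apply: eq_bigr => j _; apply: mulrC.
Qed.

Lemma one_sub_left_inverse N (E : nat -> nat -> R) : ~ is_eigenvalue N E 1 ->
  exists P : nat -> nat -> R, forall (x : nat -> R) i, (i < N)%coq_nat ->
    rsum N (fun j => P i j * (x j - rsum N (fun l => E j l * x l))) = x i.
Proof.
case: N => [|n] Hn; first by exists (fun _ _ => 0) => x i /ltP.
set C := one_sub_mx n E.
have HC : C \in unitmx by exact: one_sub_mx_unit.
exists (fun i j => invmx C (inord i) (inord j)) => x i /ltP Hi.
have Hrow (j : 'I_n.+1) :
    (x j - rsum n.+1 (fun l => E j l * x l))%R = \sum_(l < n.+1) C j l * x l.
  rewrite rsum_big.
  under [RHS]eq_bigr => l _ do rewrite mxE mulrBl.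
  rewrite sumrB; congr (_ - _).
  rewrite (bigD1 j) //= eqxx mul1r big1 ?addr0 //.
  by move=> l Hl; case: eqP => [/val_inj Hjl|]; [rewrite Hjl eqxx in Hl | rewrite mul0r].
have Hcol (l : 'I_n.+1) : \sum_(j < n.+1) invmx C (inord i) j * (C j l * x l)
    = (invmx C *m C) (inord i) l * x l.
  by rewrite mxE big_distrl; apply: eq_bigr => j _; rewrite mulrA.
rewrite rsum_big.
transitivity (\sum_(j < n.+1) invmx C (inord i) j * \sum_(l < n.+1) C j l * x l).
  by apply: eq_bigr => j _; rewrite inord_val -Hrow.
under eq_bigr => j _ do rewrite big_distrr /=.
rewrite exchange_big /=.
under eq_bigr => l _ do rewrite Hcol mulVmx // mxE.
rewrite (bigD1 (inord i)) //= eqxx mul1r big1 ?addr0 ?inordK //.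
by move=> l Hl'; rewrite eq_sym (negbTE Hl') mul0r.
Qed.

End MatrixInverse.

Definition dde_rate N (A B : nat -> nat -> R) : R :=
  INR N * (mat_abs_sum N A + mat_abs_sum N B).

Definition dde_gain N (A B P : nat -> nat -> R) (K T : R) : R :=
  INR N ^ 3 * mat_abs_sum N P * T * K * mat_abs_sum N B * dde_rate N A B.

Lemma dde_gain_ge0 N A B P K T : 0 <= K -> 0 <= T -> 0 <= dde_gain N A B P K T.
Proof.
intros HK HT. unfold dde_gain, dde_rate.
assert (0 <= INR N) by apply pos_INR.
pose proof (mat_abs_sum_ge0 N A). pose proof (mat_abs_sum_ge0 N B).
pose proof (mat_abs_sum_ge0 N P).
repeat apply Rmult_le_pos; auto; lra.
Qed.

Section DelayEquation.

Variables (N : nat) (A B : nat -> nat -> R) (tau : R) (u : R -> nat -> R).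
Hypothesis u_solves : solves_dde N A B tau u.
Local Notation M := (fun i j => A i j + B i j).

Lemma dde_solution_continuous j s : (j < N)%nat -> continuity_pt (fun r => u r j) s.
Proof. intros Hj. apply derivable_continuous_pt. eexists. apply u_solves; auto. Qed.

Lemma dde_duhamel_mvt h t0 i : 0 < h -> (i < N)%nat -> exists c, 0 < c < h /\
  u (t0 + h) i - rsum N (fun l => expmt N M h i l * u t0 l)
  = h * rsum N (fun l => expmt N M (h - c) i l *
          rsum N (fun k => B l k * (u (t0 + c - tau) k - u (t0 + c) k))).
Proof.
intros Hh Hi.
set (g := fun s => rsum N (fun l => expmt N M (h - s) i l * u (t0 + s) l)).
set (g' := fun s => rsum N (fun l =>
   (rsum N (fun k => A l k * u (t0 + s) k) + rsum N (fun k => B l k * u (t0 + s - tau) k))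
     * expmt N M (h - s) i l
   + (matmul N (expmt N M (h - s)) M i l * -1) * u (t0 + s) l)).
assert (Hg : forall s, derivable_pt_lim g s (g' s)).
{ intros s. unfold g, g'.
  apply (derivable_pt_lim_rsum N (fun l s => expmt N M (h - s) i l * u (t0 + s) l)
    (fun l s => (rsum N (fun k => A l k * u (t0 + s) k)
                 + rsum N (fun k => B l k * u (t0 + s - tau) k)) * expmt N M (h - s) i l
               + (matmul N (expmt N M (h - s)) M i l * -1) * u (t0 + s) l)).
  intros l Hl. cbv beta. rewrite Rplus_comm, (Rmult_comm _ (expmt _ _ _ _ _)).
  apply (derivable_pt_lim_mult (fun s => expmt N M (h - s) i l) (fun s => u (t0 + s) l)).
  - apply (derivable_pt_lim_reflect (fun r => expmt N M r i l)), expmt_derive; auto.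
  - apply (derivable_pt_lim_shift (fun r => u r l)), u_solves; auto. }
destruct (MVT_cor2 g g' 0 h Hh (fun c _ => Hg c)) as [c [Hc Hc_range]].
exists c. split; [exact Hc_range|].
assert (Hgh : g h = u (t0 + h) i).
{ unfold g. rewrite <- (rsum_idmat_l N i (fun l => u (t0 + h) l) Hi).
  apply rsum_ext; intros l _. rewrite Rminus_diag, expmt_0. reflexivity. }
assert (Hg0 : g 0 = rsum N (fun l => expmt N M h i l * u t0 l)).
{ unfold g. apply rsum_ext; intros l _. rewrite Rminus_0_r, Rplus_0_r. reflexivity. }
rewrite <- Hgh, <- Hg0, Hc, Rminus_0_r, Rmult_comm. f_equal.
apply rsum_dde_defect.
Qed.

Variable U : R.
Hypothesis u_bounded : forall k s, (k < N)%nat -> Rabs (u s k) <= U.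

Lemma dde_rhs_bound s k : (k < N)%nat ->
  Rabs (rsum N (fun j => A k j * u s j) + rsum N (fun j => B k j * u (s - tau) j))
  <= dde_rate N A B * U.
Proof.
intros Hk. eapply Rle_trans; [apply Rabs_triang|].
replace (dde_rate N A B * U)
  with (INR N * (mat_abs_sum N A * U) + INR N * (mat_abs_sum N B * U))
  by (unfold dde_rate; ring).
apply Rplus_le_compat; apply Rabs_rsum_le; intros j Hj;
  apply Rabs_mult_le; auto using Rabs_le_mat_abs_sum.
Qed.

Lemma dde_delay_increment s k : 0 < tau -> (k < N)%nat ->
  Rabs (u (s - tau) k - u s k) <= tau * (dde_rate N A B * U).
Proof.
intros Htau Hk.
destruct (MVT_cor2 (fun r => u r k)
  (fun r => rsum N (fun j => A k j * u r j) + rsum N (fun j => B k j * u (r - tau) j))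
  (s - tau) s) as [c [Hc _]]; [lra | intros c _; apply u_solves; auto |].
rewrite Rabs_minus_sym, Hc, Rabs_mult.
replace (s - (s - tau)) with tau by ring. rewrite (Rabs_right tau), Rmult_comm by lra.
apply Rmult_le_compat_l; [lra | apply dde_rhs_bound; auto].
Qed.

Lemma periodic_dde_abs_le (T K : R) (P : nat -> nat -> R) :
  0 < T -> 0 < tau -> periodic N T u ->
  (forall x i, (i < N)%nat ->
     rsum N (fun j => P i j * (x j - rsum N (fun l => expmt N M T j l * x l))) = x i) ->
  (forall i j r, (i < N)%nat -> (j < N)%nat -> 0 <= r <= T -> Rabs (expmt N M r i j) <= K) ->
  forall t i, (i < N)%nat -> Rabs (u t i) <= dde_gain N A B P K T * tau * U.
Proof.
intros HT Htau Hp HP HK t i Hi.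
assert (Hdefect : forall j, (j < N)%nat ->
  Rabs (u t j - rsum N (fun l => expmt N M T j l * u t l))
  <= T * (INR N * (K * (INR N * (mat_abs_sum N B * (tau * (dde_rate N A B * U))))))).
{ intros j Hj. destruct (dde_duhamel_mvt T t j HT Hj) as [c [Hc Heq]].
  rewrite Hp in Heq by auto. rewrite Heq, Rabs_mult, Rabs_right by lra.
  apply Rmult_le_compat_l; [lra|].
  apply Rabs_rsum_le; intros l Hl. apply Rabs_mult_le; [apply HK; auto; lra|].
  apply Rabs_rsum_le; intros k Hk. apply Rabs_mult_le; [apply Rabs_le_mat_abs_sum; auto|].
  apply dde_delay_increment; auto. }
rewrite <- (HP (fun l => u t l) i Hi).
eapply Rle_trans; [apply Rabs_rsum_le; intros j Hj; apply Rabs_mult_le;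
  [apply (Rabs_le_mat_abs_sum N P i j); auto | apply Hdefect; auto]|].
right. unfold dde_gain. ring.
Qed.

End DelayEquation.

Theorem lemma3 (N : nat) (A B : nat -> nat -> R) (T : R) (hT : 0 < T) :
  (forall E : nat -> nat -> R,
     is_expm N (fun i j => T * (A i j + B i j)) E -> ~ is_eigenvalue N E 1) ->
  exists tau0 : R, 0 < tau0 /\
    forall tau : R, 0 < tau < tau0 ->
      ~ (exists u : R -> nat -> R,
           solves_dde N A B tau u /\ periodic N T u /\ nontrivial N u).
Proof.
intros Hnot_eig.
set (M := fun i j => A i j + B i j).
destruct (MatrixInverse.one_sub_left_inverse N (expmt N M T)) as [P HP].
{ apply Hnot_eig, is_expm_expmt. }
destruct (expmt_bounded N M T (Rlt_le _ _ hT)) as [K [HK0 HK]].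
set (Q := dde_gain N A B P K T).
assert (HQ : 0 <= Q) by (apply dde_gain_ge0; lra).
exists (/ (Q + 1)). split; [apply Rinv_0_lt_compat; lra|].
intros tau [Htau Htau0] [u [Hs [Hp [t1 [i1 [Hi1 Hne]]]]]].
assert (HQtau : Q * tau < 1).
{ apply (Rmult_lt_compat_l (Q + 1)) in Htau0; [|lra].
  rewrite Rinv_r in Htau0 by lra. nra. }
destruct (periodic_abs_max N T u hT ltac:(lia) Hp (dde_solution_continuous N A B tau u Hs))
  as [j0 [t0 [Hj0 Hmax]]].
set (U := Rabs (u t0 j0)).
assert (HU : U <= Q * tau * U)
  by exact (periodic_dde_abs_le N A B tau u Hs U Hmax T K P hT Htau Hp HP HK t0 j0 Hj0).
assert (U_ge0 : 0 <= U) by apply Rabs_pos.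
assert (HU0 : U = 0) by nra.
apply Hne, Rabs_eq_0, Rle_antisym; [|apply Rabs_pos].
rewrite <- HU0. apply Hmax; auto.
Qed.
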